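(* Let $D=[0,1]^2\setminus\{(0,0),(1,1)\}$. A function $J\colon D\to[0,1]$ is an involutive Jamesian function if and only if it satisfies the following three conditions: (i) $J(a,J(a,b))=b$ for all $0<a<1$ and $0\le b\le 1$; (ii) $J(b,a)=1-J(a,b)$ for all $(a,b)\in D$; (iii) $J(a,b)$ is a non-decreasing function of $a$ for each $0\le b\le 1$ and a strictly increasing function of $a$ for each $0<b<1$.
   Context: Let $D=[0,1]^2\setminus\{(0,0),(1,1)\}$. A function $J\colon D\to\mathbb{R}$ is called Jamesian if it satisfies, for all $(a,b)\in D$: (a) $J(a,\tfrac12)=a$; (b) $J(a,0)=1$ for $0<a\le 1$; (c) $J(b,a)=1-J(a,b)$; (d) $J(1-b,1-a)=J(a,b)$; (e) $J(a,b)$ is a non-decreasing function of $a$ for each $0\le b\le 1$ and a strictly increasing function of $a$ for each $0<b<1$. A Jamesian function is called involutive if in addition $J(a,J(a,b))=b$ whenever $0<a<1$ and $0\le b\le 1$. *)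

From Stdlib Require Import Reals Lra.
Open Scope R_scope.

Definition inD (a b : R) : Prop :=
  0 <= a <= 1 /\ 0 <= b <= 1 /\ ~ (a = 0 /\ b = 0) /\ ~ (a = 1 /\ b = 1).

Definition J_monotone (J : R -> R -> R) : Prop :=
  (forall b, 0 <= b <= 1 ->
     forall a1 a2, inD a1 b -> inD a2 b -> a1 <= a2 -> J a1 b <= J a2 b) /\
  (forall b, 0 < b < 1 ->
     forall a1 a2, inD a1 b -> inD a2 b -> a1 < a2 -> J a1 b < J a2 b).

(* Only the values of J on D matter. *)
Definition Jamesian (J : R -> R -> R) : Prop :=
  (forall a b, inD a b -> J a (1/2) = a) /\
  (forall a, 0 < a <= 1 -> J a 0 = 1) /\
  (forall a b, inD a b -> J b a = 1 - J a b) /\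
  (forall a b, inD a b -> J (1 - b) (1 - a) = J a b) /\
  J_monotone J.

Definition involutive_Jamesian (J : R -> R -> R) : Prop :=
  Jamesian J /\
  (forall a b, 0 < a < 1 -> 0 <= b <= 1 -> J a (J a b) = b).

(** The swap rule [J(b,a) = 1 - J(a,b)] forces [J(a,a) = 1/2], and the
    involution at [a] then gives [J(a,1/2) = a].  Monotonicity in [a] together
    with the swap rule makes [J(a,.)] non-increasing, so the involution must
    exchange the endpoints: [J(a,0) = 1] and [J(a,1) = 0]; the swap rule
    propagates these values to the edges of the square.  On the open square,
    swap followed by involution gives [J(b, 1 - J(a,b)) = a]; applying this
    three times rotates [(a, b)] to [(1-a, 1-b)] and yields the reflection
    symmetry [J(1-b,1-a) = J(a,b)]. *)

From Stdlib Require Import Reals Lra.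
Open Scope R_scope.

Lemma inD_intro (a b : R) :
  0 <= a <= 1 -> 0 <= b <= 1 -> (0 < a \/ 0 < b) -> (a < 1 \/ b < 1) -> inD a b.
Proof. intros; unfold inD; repeat split; try lra; intros [? ?]; lra. Qed.

Lemma inD_bounds (a b : R) : inD a b -> 0 <= a <= 1 /\ 0 <= b <= 1.
Proof. unfold inD; tauto. Qed.

Ltac solve_inD := apply inD_intro; lra.

Section InvolutiveSwapMonotone.

Variable J : R -> R -> R.

Hypothesis J_bounded : forall a b, inD a b -> 0 <= J a b <= 1.
Hypothesis J_invol : forall a b, 0 < a < 1 -> 0 <= b <= 1 -> J a (J a b) = b.
Hypothesis J_swap : forall a b, inD a b -> J b a = 1 - J a b.
Hypothesis J_nondecr : forall b, 0 <= b <= 1 ->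
  forall a1 a2, inD a1 b -> inD a2 b -> a1 <= a2 -> J a1 b <= J a2 b.

Lemma J_diag (a : R) : 0 < a < 1 -> J a a = 1 / 2.
Proof. intros Ha; assert (h := J_swap a a ltac:(solve_inD)); lra. Qed.

Lemma J_antitone_snd (a b1 b2 : R) :
  0 < a < 1 -> 0 <= b1 -> b1 <= b2 -> b2 <= 1 -> J a b2 <= J a b1.
Proof.
  intros Ha ? ? ?.
  assert (h1 := J_swap a b1 ltac:(solve_inD)).
  assert (h2 := J_swap a b2 ltac:(solve_inD)).
  assert (h3 := J_nondecr a ltac:(lra) b1 b2 ltac:(solve_inD) ltac:(solve_inD) ltac:(lra)).
  lra.
Qed.

Lemma J_inner_zero (a : R) : 0 < a < 1 -> J a 0 = 1.
Proof.
  intros Ha.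
  assert (h := J_invol a 1 Ha ltac:(lra)).
  assert (b1 := J_bounded a 1 ltac:(solve_inD)).
  assert (b0 := J_bounded a 0 ltac:(solve_inD)).
  assert (d := J_antitone_snd a 0 (J a 1) Ha ltac:(lra) ltac:(lra) ltac:(lra)).
  lra.
Qed.

Lemma J_inner_one (a : R) : 0 < a < 1 -> J a 1 = 0.
Proof.
  intros Ha.
  assert (h := J_invol a 0 Ha ltac:(lra)).
  assert (b0 := J_bounded a 0 ltac:(solve_inD)).
  assert (b1 := J_bounded a 1 ltac:(solve_inD)).
  assert (d := J_antitone_snd a (J a 0) 1 Ha ltac:(lra) ltac:(lra) ltac:(lra)).
  lra.
Qed.

Lemma J_one_zero : J 1 0 = 1.
Proof.
  assert (h := J_nondecr 0 ltac:(lra) (1 / 2) 1 ltac:(solve_inD) ltac:(solve_inD) ltac:(lra)).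
  assert (e := J_inner_zero (1 / 2) ltac:(lra)).
  assert (b := J_bounded 1 0 ltac:(solve_inD)).
  lra.
Qed.

Lemma J_zero_right (a : R) : 0 < a <= 1 -> J a 0 = 1.
Proof.
  intros Ha; destruct (Req_dec a 1) as [->|]; [exact J_one_zero|].
  apply J_inner_zero; lra.
Qed.

Lemma J_one_right (a : R) : 0 <= a < 1 -> J a 1 = 0.
Proof.
  intros Ha; destruct (Req_dec a 0) as [->|].
  - assert (h := J_swap 1 0 ltac:(solve_inD)); rewrite J_one_zero in h; lra.
  - apply J_inner_one; lra.
Qed.

Lemma J_zero_left (b : R) : 0 < b <= 1 -> J 0 b = 0.
Proof.
  intros Hb; assert (h := J_swap b 0 ltac:(solve_inD)).
  rewrite (J_zero_right b Hb) in h; lra.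
Qed.

Lemma J_one_left (b : R) : 0 <= b < 1 -> J 1 b = 1.
Proof.
  intros Hb; assert (h := J_swap b 1 ltac:(solve_inD)).
  rewrite (J_one_right b Hb) in h; lra.
Qed.

Lemma J_half (a : R) : 0 <= a <= 1 -> J a (1 / 2) = a.
Proof.
  intros Ha.
  destruct (Req_dec a 0) as [->|a0]; [apply J_zero_left; lra|].
  destruct (Req_dec a 1) as [->|a1]; [apply J_one_left; lra|].
  rewrite <- (J_diag a) at 1 by lra. apply J_invol; lra.
Qed.

Lemma J_open_square (a b : R) : 0 < a < 1 -> 0 < b < 1 -> 0 < J a b < 1.
Proof.
  intros Ha Hb.
  assert (bd := J_bounded a b ltac:(solve_inD)).
  assert (h := J_invol a b Ha ltac:(lra)).
  destruct (Req_dec (J a b) 0) as [e|n0].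
  { rewrite e, (J_inner_zero a Ha) in h; lra. }
  destruct (Req_dec (J a b) 1) as [e|n1].
  { rewrite e, (J_inner_one a Ha) in h; lra. }
  lra.
Qed.

Lemma J_rotate (a b : R) : 0 < a < 1 -> 0 < b < 1 -> J b (1 - J a b) = a.
Proof.
  intros Ha Hb; rewrite <- (J_swap a b) by solve_inD; apply J_invol; lra.
Qed.

Lemma J_reflect (a b : R) : inD a b -> J (1 - b) (1 - a) = J a b.
Proof.
  intros Hab; destruct Hab as (Ha & Hb & N0 & N1).
  destruct (Req_dec a 0) as [->|a0].
  { assert (b <> 0) by (intro; apply N0; split; auto).
    rewrite J_zero_left, Rminus_0_r, J_one_right by lra; reflexivity. }
  destruct (Req_dec a 1) as [->|a1].
  { assert (b <> 1) by (intro; apply N1; split; auto).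
    rewrite J_one_left, Rminus_diag, J_zero_right by lra; reflexivity. }
  destruct (Req_dec b 0) as [->|b0].
  { rewrite J_zero_right, Rminus_0_r, J_one_left by lra; reflexivity. }
  destruct (Req_dec b 1) as [->|b1].
  { rewrite J_one_right, Rminus_diag, J_zero_left by lra; reflexivity. }
  set (c := J a b).
  assert (Hc : 0 < c < 1) by (apply J_open_square; lra).
  assert (r1 : J b (1 - c) = a) by (apply J_rotate; lra).
  assert (r2 : J (1 - c) (1 - a) = b)
    by (rewrite <- r1 at 1; apply J_rotate; lra).
  assert (r3 : J (1 - a) (1 - b) = 1 - c)
    by (rewrite <- r2 at 1; apply J_rotate; lra).
  assert (h := J_swap (1 - b) (1 - a) ltac:(solve_inD)); lra.
Qed.

End InvolutiveSwapMonotone.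

Theorem proposition5p1 (J : R -> R -> R)
  (HJ01 : forall a b, inD a b -> 0 <= J a b <= 1) :
  involutive_Jamesian J <->
  ((forall a b, 0 < a < 1 -> 0 <= b <= 1 -> J a (J a b) = b) /\
   (forall a b, inD a b -> J b a = 1 - J a b) /\
   J_monotone J).
Proof.
  split.
  - intros [(_ & _ & Hswap & _ & Hmono) Hinv]; tauto.
  - intros (Hinv & Hswap & Hmono).
    pose proof (proj1 Hmono) as Hnondecr.
    split; [|exact Hinv].
    split; [|split; [|split; [|split]]].
    + intros a b Hab; apply (J_half J HJ01 Hinv Hswap Hnondecr).
      exact (proj1 (inD_bounds a b Hab)).
    + exact (J_zero_right J HJ01 Hinv Hswap Hnondecr).
    + exact Hswap.
    + exact (J_reflect J HJ01 Hinv Hswap Hnondecr).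
    + exact Hmono.
Qed.
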